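(* Let $G$ be a connected graph with girth at least $5$ and maximum degree $\Delta$, and suppose $G$ is not $\Delta$-regular (i.e. some vertex has degree at most $\Delta-1$). Then $\chi_D(G)\le\Delta+1$.
   Context: A $k$-coloring of $G$ is a map $\varphi:V(G)\to\{1,\dots,k\}$; it is proper if adjacent vertices get different colors, and distinguishing if the only automorphism $f$ of $G$ with $\varphi(f(v))=\varphi(v)$ for all $v$ is the identity. $\chi_D(G)$ is the smallest number of colors in a proper distinguishing coloring of $G$. *)

From mathcomp Require Import all_boot all_fingroup.
Set Implicit Arguments. Unset Strict Implicit. Unset Printing Implicit Defensive.

Definition simple_graph (T : finType) (e : rel T) : Prop :=
  symmetric e /\ irreflexive e.

Definition connected (T : finType) (e : rel T) : Prop :=
  forall x y : T, connect e x y.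

Definition deg (T : finType) (e : rel T) (v : T) : nat := #|[set u | e v u]|.

Definition maxdeg (T : finType) (e : rel T) : nat := \max_(v : T) deg e v.

Definition is_cycle_of_length (T : finType) (e : rel T) (n : nat) (c : seq T) : bool :=
  [&& size c == n, 3 <= n, uniq c & path.cycle e c].

(* girth at least g: no cycle of length < g (acyclic graphs have infinite girth) *)
Definition girth_ge (T : finType) (e : rel T) (g : nat) : Prop :=
  forall (n : nat) (c : seq T), is_cycle_of_length e n c -> g <= n.

Definition automorphism (T : finType) (e : rel T) (f : {perm T}) : Prop :=
  forall x y, e (f x) (f y) = e x y.

Definition proper_coloring (T : finType) (e : rel T) (k : nat) (phi : T -> 'I_k) : Prop :=
  forall x y, e x y -> phi x != phi y.

Definition distinguishing (T : finType) (e : rel T) (k : nat) (phi : T -> 'I_k) : Prop :=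
  forall f : {perm T}, automorphism e f -> (forall v, phi (f v) = phi v) -> f = 1%g.

Definition chiD_le (T : finType) (e : rel T) (k : nat) : Prop :=
  exists phi : T -> 'I_k, proper_coloring e phi /\ distinguishing e phi.

From mathcomp Require Import all_boot all_fingroup.
Set Implicit Arguments. Unset Strict Implicit. Unset Printing Implicit Defensive.

(* Colour a vertex r of degree < Delta with 0 and grow a connected set S around
   r, colouring new vertices so that 0 is never used again on a vertex of
   degree < Delta; then every colour-preserving automorphism fixes r.  When S
   is extended by the outside neighbours of some u in S, the neighbours whose
   only neighbour in S is u receive pairwise distinct colours from the
   Delta - 1 colours other than 0 and c u (there are fewer than Delta of them,
   since u already has a neighbour in S or is r), so they cannot be permuted;
   any other new neighbour v has a second neighbour x in S, and an automorphism
   fixing S that moved v would create the 4-cycle v u (f v) x.  Girth 5 also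
   makes the new neighbours independent, so the colouring stays proper. *)


Section Embedding.
Variables (A B : finType) (X : {set A}) (Y : {set B}) (b0 : B).
Hypothesis leq_card_XY : #|X| <= #|Y|.

Definition embed (a : A) : B := nth b0 (enum Y) (index a (enum X)).

Lemma index_enum_lt a : a \in X -> index a (enum X) < size (enum Y).
Proof.
by move=> Xa; rewrite -cardE (leq_trans _ leq_card_XY) // cardE index_mem mem_enum.
Qed.

Lemma embed_mem a : a \in X -> embed a \in Y.
Proof. by move=> Xa; rewrite -mem_enum mem_nth ?index_enum_lt. Qed.

Lemma embed_inj : {in X &, injective embed}.
Proof.
move=> a1 a2 X1 X2 /eqP; rewrite nth_uniq ?enum_uniq ?index_enum_lt // => /eqP.
by apply: index_inj; rewrite ?mem_enum.
Qed.

End Embedding.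

Lemma pick_compl_notin (A : finType) (B : {set A}) (a0 : A) :
  #|B| < #|A| -> odflt a0 [pick a in ~: B] \notin B.
Proof.
move=> ltBA; case: pickP => [a|none]; first by rewrite inE.
suff: #|A| <= #|B| by rewrite leqNgt ltBA.
rewrite -cardsT subset_leq_card //; apply/subsetP => a _.
by have := none a; rewrite inE => /negbFE.
Qed.

Section Graph.
Variables (T : finType) (e : rel T).

Lemma deg_le_maxdeg v : deg e v <= maxdeg e.
Proof. exact: (@leq_bigmax T (deg e) v). Qed.

Lemma deg_automorphism (f : {perm T}) v : automorphism e f -> deg e (f v) = deg e v.
Proof.
move=> autf; rewrite /deg -[RHS](card_imset _ (@perm_inj _ f)).
apply: eq_card => u; rewrite inE; apply/idP/imsetP => [|[w]].
- by exists (f^-1 u)%g; rewrite ?permKV // inE -autf permKV.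
- by rewrite inE => evw ->; rewrite autf.
Qed.

Lemma automorphism_fix_notin (f : {perm T}) (S : {set T}) v :
  {in S, forall x, f x = x} -> v \notin S -> f v \notin S.
Proof.
move=> fixS; apply: contra => Sfv.
by rewrite -(perm_inj (fixS _ Sfv)).
Qed.

Lemma automorphism_fix_edge (f : {perm T}) (S : {set T}) v x :
  automorphism e f -> {in S, forall x, f x = x} -> x \in S -> e (f v) x = e v x.
Proof. by move=> autf fixS Sx; rewrite -{1}(fixS x Sx) autf. Qed.

Lemma connected_exit_edge (S : {set T}) r y :
  connected e -> r \in S -> y \notin S ->
  exists u w, [/\ u \in S, w \notin S & e u w].
Proof.
move=> conn Sr; have [p] := connectP (conn r y); elim: p r Sr => [|z p IH] x Sx /=.
  by move=> _ ->; rewrite Sx.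
case/andP=> exz pz yl Sy; case: (boolP (z \in S)) => Sz; first exact: IH Sz pz yl Sy.
by exists x, z.
Qed.

Hypotheses (sg : simple_graph e) (girth5 : girth_ge e 5).

Lemma edge_neq x y : e x y -> x != y.
Proof. by case: sg => _ irr; apply: contraTneq => ->; rewrite irr. Qed.

Lemma no_triangle a b c : e a b -> e b c -> e c a -> False.
Proof.
move=> eab ebc eca.
have: is_cycle_of_length e 3 [:: a; b; c].
  rewrite /is_cycle_of_length /= !inE negb_or eab ebc eca.
  by rewrite (edge_neq eab) (edge_neq ebc) eq_sym (edge_neq eca).
by move/girth5.
Qed.

Lemma common_nbrs_eq u x v w : u != x -> e v u -> e v x -> e w u -> e w x -> v = w.
Proof.
case: sg => esym _ neux evu evx ewu ewx; apply/eqP; apply: contraT => nevw.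
have: is_cycle_of_length e 4 [:: v; u; w; x].
  rewrite /is_cycle_of_length /= !inE evu ewx esym ewu esym evx.
  rewrite !negb_or (edge_neq evu) nevw (edge_neq evx) neux (edge_neq ewx).
  by rewrite eq_sym (edge_neq ewu).
by move/girth5.
Qed.

End Graph.

Section Growth.
Variables (T : finType) (e : rel T) (r : T).
Hypotheses (sg : simple_graph e) (girth5 : girth_ge e 5).
Hypothesis r_low : deg e r < maxdeg e.

Local Notation Delta := (maxdeg e).
Local Notation color := 'I_Delta.+1.

Definition marks_root (c : T -> color) v : Prop :=
  v != r -> deg e v < Delta -> c v != ord0.

Definition rigid (S : {set T}) (c : T -> color) : Prop :=
  forall c' : T -> color, {in S, c' =1 c} -> (forall v, marks_root c' v) ->
  forall f : {perm T}, automorphism e f -> (forall v, c' (f v) = c' v) ->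
  {in S, forall v, f v = v}.

Record colored_part (S : {set T}) (c : T -> color) : Prop := ColoredPart {
  part_root : r \in S;
  part_proper : {in S &, forall x y, e x y -> c x != c y};
  part_marks : {in S, forall v, marks_root c v};
  part_anchored : {in S, forall v, v != r -> exists2 x, x \in S & e v x};
  part_rigid : rigid S c }.

Lemma colored_part_root : colored_part [set r] (fun _ => ord0).
Proof.
case: sg => _ irr; split=> [||v|v|c' c'r marks f autf fc' v]; rewrite ?inE //.
- by move=> x y /set1P-> /set1P->; rewrite irr.
- by move=> /eqP-> /eqP.
- by move=> /eqP-> /eqP.
move=> /eqP->; apply/eqP; apply: contraT => fr_r.
have := marks _ fr_r; rewrite deg_automorphism // fc' c'r ?inE //.
by move/(_ r_low); rewrite eqxx.
Qed.

Section Step.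
Variables (S : {set T}) (c : T -> color) (u : T).
Hypotheses (partSc : colored_part S c) (Su : u \in S).

Definition outer : {set T} := [set w | e u w & w \notin S].
Definition pendant : {set T} := [set w in outer | [forall x in S, e w x ==> (x == u)]].
Definition palette : {set color} := [set i | (i != ord0) && (i != c u)].
Definition forbidden w : {set color} :=
  c @: [set x in S | e w x] :|: (if deg e w < Delta then [set ord0] else set0).

(* Only the values on [S :|: outer] matter; the fallback colour is junk elsewhere. *)
Definition extend v : color :=
  if v \in S then c v
  else if v \in pendant then embed pendant palette ord0 v
  else odflt ord0 [pick i in ~: forbidden v].

Lemma card_outer_lt : #|outer| < Delta.
Proof.
rewrite /outer; have [-> | ur] := eqVneq u r.
  by apply: leq_ltn_trans r_low; apply/subset_leq_card/subsetP => w; rewrite !inE => /andP[].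
have [x Sx eux] := part_anchored partSc Su ur.
apply: leq_trans (deg_le_maxdeg e u).
rewrite /deg (cardsD1 x [set y | e u y]) inE eux add1n ltnS subset_leq_card //.
apply/subsetP => w; rewrite !inE => /andP[euw Sw]; rewrite euw andbT.
by apply: contraNneq Sw => ->.
Qed.

Lemma card_pendant_le : #|pendant| <= #|palette|.
Proof.
have pendant_outer : #|pendant| <= #|outer|.
  by apply/subset_leq_card/subsetP => w; rewrite inE => /andP[].
have -> : palette = ~: [set ord0; c u] by apply/setP => i; rewrite !inE negb_or.
rewrite -(leq_add2l #|[set ord0; c u]|) cardsC card_ord cards2 addSn ltnS.
by rewrite (leq_trans (leq_add (leq_b1 _) pendant_outer)) // add1n card_outer_lt.
Qed.

Lemma card_forbidden w : #|forbidden w| < #|color|.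
Proof.
rewrite card_ord ltnS cardsU (leq_trans (leq_subr _ _)) //.
have img_le : #|c @: [set x in S | e w x]| <= deg e w.
  rewrite (leq_trans (leq_imset_card _ _)) // subset_leq_card //.
  by apply/subsetP => x; rewrite !inE => /andP[].
case: ltnP => deg_w; rewrite ?cards1 ?cards0 ?addn1 ?addn0.
- exact: leq_ltn_trans img_le deg_w.
- exact: leq_trans img_le (deg_le_maxdeg e w).
Qed.

Lemma extend_on_S v : v \in S -> extend v = c v.
Proof. by rewrite /extend => ->. Qed.

Lemma pendant_notin_S v : v \in pendant -> v \notin S.
Proof. by rewrite !inE => /andP[/andP[]]. Qed.

Lemma extend_pendant v : v \in pendant -> extend v = embed pendant palette ord0 v.
Proof. by move=> Fv; rewrite /extend (negbTE (pendant_notin_S Fv)) Fv. Qed.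

Lemma extend_pendant_mem v : v \in pendant -> extend v \in palette.
Proof. by move=> Fv; rewrite extend_pendant // embed_mem // card_pendant_le. Qed.

Lemma extend_free v : v \notin S -> v \notin pendant -> extend v \notin forbidden v.
Proof.
by rewrite /extend => /negbTE-> /negbTE->; apply: pick_compl_notin; apply: card_forbidden.
Qed.

Lemma extend_cross x y : x \in S -> y \in outer -> e y x -> c x != extend y.
Proof.
move=> Sx Oy eyx; have Sy : y \notin S by move: Oy; rewrite inE => /andP[].
case: (boolP (y \in pendant)) => Fy.
  have /eqP-> : x == u.
    by move: Fy; rewrite inE => /andP[_ /forall_inP/(_ x Sx)/implyP]; apply.
  by have := extend_pendant_mem Fy; rewrite inE => /andP[_]; apply: contra => /eqP->.
apply: contraNneq (extend_free Sy Fy) => <-.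
by rewrite /forbidden in_setU imset_f // inE Sx.
Qed.

Lemma extend_proper : {in S :|: outer &, forall x y, e x y -> extend x != extend y}.
Proof.
case: sg => esym _ x y; rewrite !in_setU.
case: (boolP (x \in S)) => Sx; case: (boolP (y \in S)) => Sy /= Ox Oy exy.
- by rewrite !extend_on_S //; apply: (part_proper partSc).
- by rewrite extend_on_S //; apply: extend_cross; rewrite // esym.
- by rewrite eq_sym extend_on_S //; apply: extend_cross.
- move: Ox Oy; rewrite !inE => /andP[eux _] /andP[euy _].
  by exfalso; apply: (no_triangle sg girth5 eux exy); rewrite esym.
Qed.

Lemma extend_marks : {in S :|: outer, forall v, marks_root extend v}.
Proof.
move=> v; rewrite in_setU; case: (boolP (v \in S)) => Sv /= Ov vr low_v.
  by rewrite extend_on_S //; apply: (part_marks partSc).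
case: (boolP (v \in pendant)) => Fv.
  by have := extend_pendant_mem Fv; rewrite inE => /andP[].
apply: contraNneq (extend_free Sv Fv) => ->.
by rewrite /forbidden in_setU low_v in_set1 eqxx orbT.
Qed.

Lemma extend_anchored :
  {in S :|: outer, forall v, v != r -> exists2 x, x \in S :|: outer & e v x}.
Proof.
case: sg => esym _ v; rewrite in_setU; case: (boolP (v \in S)) => Sv /= Ov vr.
  by have [x Sx evx] := part_anchored partSc Sv vr; exists x; rewrite // in_setU Sx.
exists u; first by rewrite in_setU Su.
by move: Ov; rewrite inE esym => /andP[].
Qed.

Lemma extend_rigid : rigid (S :|: outer) extend.
Proof.
case: sg => esym _ c' c'_ext marks f autf fc'.
have fixS : {in S, forall x, f x = x}.
  apply: (part_rigid partSc _ marks autf fc') => x Sx.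
  by rewrite c'_ext ?in_setU ?Sx // extend_on_S.
move=> v; rewrite in_setU; case: (boolP (v \in S)) => [Sv _|Sv /= Ov]; first exact: fixS.
have evu : e v u by move: Ov; rewrite inE esym => /andP[->].
have Sfv := automorphism_fix_notin fixS Sv.
have fv_edge x : x \in S -> e (f v) x = e v x by apply: automorphism_fix_edge.
have Ofv : f v \in outer by rewrite inE Sfv andbT esym fv_edge.
case: (boolP (v \in pendant)) => Fv.
  have Ffv : f v \in pendant.
    rewrite inE Ofv; apply/forall_inP => x Sx; rewrite fv_edge //.
    by move: Fv; rewrite inE => /andP[_ /forall_inP]; apply.
  apply: (embed_inj (b0 := ord0) card_pendant_le) => //.
  by rewrite -!extend_pendant // -!c'_ext ?in_setU ?Ofv ?Ov ?orbT.
have [x Sx /andP[evx xu]] : exists2 x, x \in S & e v x && (x != u).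
  by move: Fv; rewrite inE Ov /= => /forall_inPn[x Sx]; rewrite negb_imply; exists x.
by apply: (common_nbrs_eq sg girth5 _ _ _ evu evx); rewrite ?fv_edge // eq_sym.
Qed.

Lemma colored_part_extend : colored_part (S :|: outer) extend.
Proof.
split; [|exact: extend_proper|exact: extend_marks|exact: extend_anchored|exact: extend_rigid].
by rewrite in_setU (part_root partSc).
Qed.

End Step.

Lemma colored_part_grow S c u w :
  colored_part S c -> u \in S -> e u w -> w \notin S ->
  exists S' (c' : T -> color), colored_part S' c' /\ #|S| < #|S'|.
Proof.
move=> partSc Su euw Sw; exists (S :|: outer S u), (extend S c u).
split; first exact: colored_part_extend.
apply/proper_card/properP; split; first exact: subsetUl.
by exists w; rewrite // in_setU inE euw Sw orbT.
Qed.

Lemma colored_part_full : connected e -> exists c, colored_part [set: T] c.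
Proof.
move=> conn.
have grow n : n <= #|T| -> exists S c, colored_part S c /\ n <= #|S|.
  elim: n => [|n IH] le_n.
    by exists [set r], (fun=> ord0); split; first exact: colored_part_root.
  have [S [c [partSc le_nS]]] := IH (ltnW le_n).
  have [lt_nS | le_Sn] := ltnP n #|S|; first by exists S, c.
  have /subsetPn [y _ Sy] : ~~ ([set: T] \subset S).
    by apply: contraTN le_n => /subset_leq_card; rewrite cardsT -leqNgt => /leq_trans; apply.
  have [u [w [Su Sw euw]]] := connected_exit_edge conn (part_root partSc) Sy.
  have [S' [c' [partS'c' lt_SS']]] := colored_part_grow partSc Su euw Sw.
  by exists S', c'; split; last exact: leq_ltn_trans le_nS lt_SS'.
have [S [c [partSc le_TS]]] := grow _ (leqnn _).
by exists c; have /eqP <- : S == setT by rewrite eqEcard subsetT cardsT.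
Qed.

End Growth.

Theorem mainTheorem7 (T : finType) (e : rel T) :
  simple_graph e -> connected e -> girth_ge e 5 ->
  (exists v : T, deg e v < maxdeg e) ->
  chiD_le e (maxdeg e).+1.
Proof.
move=> sg conn girth5 [r r_low].
have [c part_c] := colored_part_full sg girth5 r_low conn.
exists c; split=> [x y exy | f autf fc].
  by apply: (part_proper part_c); rewrite ?inE.
apply/permP => v; rewrite perm1.
by apply: (part_rigid part_c _ (fun w => part_marks part_c (in_setT w)) autf fc).
Qed.
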